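(* Let $\phi,\psi$ be seeds with $parent(\psi)=\phi$ and let $i\in\{1,\dots,n-3\}$. Then $\psi=son(\phi,i)$ if and only if $ord(\psi)=i$.
   Context: Fix an integer $n\ge 5$. An $n$-permutation is a sequence $(a_1,\dots,a_n)$ of the distinct elements of $\{1,\dots,n\}$. For $\pi=(a_1,\dots,a_n)$ put $\sigma(\pi)=(a_2,\dots,a_n,a_1)$; $\sigma^i$ is $\sigma$ applied $i$ times. On $\{1,\dots,n-1\}$ let $a\oplus 1=a+1$ for $a<n-1$ and $(n-1)\oplus 1=1$. A seed is an $(n-1)$-tuple $\psi=(a_1,\dots,a_{n-1})$ of distinct elements of $\{1,\dots,n\}$ with $a_1=n$ and $a_2\oplus1\notin\{a_1,\dots,a_{n-1}\}$; its missing element is $mis(\psi)=a_2\oplus 1$. The package $perms(\psi)$ is the set of all $n$-permutations obtained from $\psi$ by inserting $mis(\psi)$ at any position and then applying any cyclic rotation. Seeds $\phi,\psi$ are neighbors if $perms(\phi)\cap perms(\psi)\neq\emptyset$. For a seed $\psi=(a_1,\dots,a_{n-1})$ with $x=mis(\psi)$: $height(\psi)$ is the largest $k\in\{1,\dots,n-2\}$ such that $a_i=a_{i+1}\oplus 1$ for all $2\le i\le k$; $\widetilde\psi=(a_1,x,a_2,\dots,a_{n-1})$; for $1\le i\le n-1$, $\psi^{(i)}=(x,c_1,\dots,c_{n-1})$ where $(c_1,\dots,c_{n-1})$ is $\psi$ cyclically rotated to the right by $i-1$ positions. For distinct neighboring seeds $\beta,\psi$ we write $parent(\beta)=\psi$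 if $height(\psi)>1$ and $mis(\psi)=mis(\beta)\oplus 1$; if moreover $\sigma^i(\psi^{(i)})=\widetilde\beta$ we write $son(\psi,i)=\beta$. For a seed $\psi$, $ord(\psi)$ is the position of the entry $mis(\psi)\oplus 1$ in $\psi$ counted from the right end (the last entry of $\psi$ has position $1$). *)

From mathcomp Require Import all_boot.
Set Implicit Arguments. Unset Strict Implicit. Unset Printing Implicit Defensive.

Definition oplus (n a : nat) : nat := if a < n.-1 then a.+1 else 1.

Definition sigma (s : seq nat) : seq nat := rot 1 s.

(* a seed: (n-1)-tuple of distinct elements of {1..n}, a_1 = n,
   a_2 (+) 1 not among the entries.  Entry a_k is nth 0 s k.-1. *)
Definition is_seed (n : nat) (s : seq nat) : bool :=
  [&& size s == n.-1, uniq s, all (fun a => (1 <= a) && (a <= n)) s,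
      nth 0 s 0 == n & oplus n (nth 0 s 1) \notin s].

Definition mis (n : nat) (s : seq nat) : nat := oplus n (nth 0 s 1).

Definition in_perms (n : nat) (s p : seq nat) : Prop :=
  exists j k, j <= size s /\ p = iter k sigma (take j s ++ mis n s :: drop j s).

Definition neighbors (n : nat) (phi psi : seq nat) : Prop :=
  exists p, in_perms n phi p /\ in_perms n psi p.

Definition height_ok (n : nat) (s : seq nat) (k : nat) : bool :=
  all (fun i => nth 0 s i.-1 == oplus n (nth 0 s i)) (iota 2 k.-1).

Definition height (n : nat) (s : seq nat) : nat :=
  \max_(1 <= k < n.-1 | height_ok n s k) k.

Definition tilde (n : nat) (s : seq nat) : seq nat :=
  nth 0 s 0 :: mis n s :: behead s.

Definition psi_i (n : nat) (s : seq nat) (i : nat) : seq nat :=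
  mis n s :: rotr i.-1 s.

Definition parent (n : nat) (beta psi : seq nat) : Prop :=
  [/\ beta <> psi, neighbors n beta psi, 1 < height n psi
    & mis n psi = oplus n (mis n beta)].

Definition son (n : nat) (psi : seq nat) (i : nat) (beta : seq nat) : Prop :=
  parent n beta psi /\ iter i sigma (psi_i n psi i) = tilde n beta.

(* position of mis(psi) (+) 1 in psi, counted from the right (last = 1) *)
Definition ord (n : nat) (s : seq nat) : nat :=
  size s - index (oplus n (mis n s)) s.

From mathcomp Require Import all_boot zify.

Set Implicit Arguments.
Unset Strict Implicit.
Unset Printing Implicit Defensive.

(* Rotating a common permutation of phi and psi so that it starts with n
   shows that psi arises from phi by deleting a = phi_2 and inserting
   x = mis(phi) into the tail t of phi, at some position m.  Since
   mis(psi) = a, the entry counted by ord(psi) is x, so ord(psi) = |t| + 1 - m.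
   On the other hand sigma^i(phi^(i)) is phi with x inserted into t at
   position |t| + 1 - i, while psi~ is phi with x inserted at position m;
   as x does not occur in t, these agree exactly when m = |t| + 1 - i. *)

Section Insertion.
Variable T : eqType.
Implicit Types (s : seq T) (e x : T).

Definition ins s j e := take j s ++ e :: drop j s.

Lemma size_ins s j e : size (ins s j e) = (size s).+1.
Proof. by rewrite /ins size_cat /= addnS -size_cat cat_take_drop. Qed.

Lemma perm_ins s j e : perm_eq (ins s j e) (e :: s).
Proof. by rewrite /ins -cat1s perm_catCA cat_take_drop. Qed.

Lemma rem_ins s j e : e \notin s -> rem e (ins s j e) = s.
Proof.
elim: s j => [|a s IHs] [|j] //=; rewrite ?eqxx // inE negb_or eq_sym.
by case/andP=> /negbTE-> /IHs ->.
Qed.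

Lemma index_ins s j e : e \notin s -> j <= size s -> index e (ins s j e) = j.
Proof.
move=> es js; have /negbTE et : e \notin take j s by apply: contra es; apply: mem_take.
by rewrite /ins index_cat et size_take /= eqxx addn0; case: ltngtP js; lia.
Qed.

Lemma ins_pos_inj s j k e : e \notin s -> j <= size s -> k <= size s ->
  ins s j e = ins s k e -> j = k.
Proof. by move=> es js ks /(congr1 (index e)); rewrite !index_ins. Qed.

Lemma iter_rot1 k s : k <= size s -> iter k (rot 1) s = rot k s.
Proof.
elim: k => [|k IHk] ks /=; first by rewrite rot0.
by rewrite IHk ?(ltnW ks) // -rotD //; lia.
Qed.

Lemma iter_rot1_cons_rotr i s e : 0 < i <= (size s).+1 ->
  iter i (rot 1) (e :: rotr i.-1 s) = ins s (size s - i.-1) e.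
Proof.
move=> i_bd; rewrite /ins.
set u := take _ s; set v := drop _ s.
have sz_v : size v = i.-1 by rewrite size_drop; lia.
have -> : s = u ++ v by rewrite cat_take_drop.
rewrite -sz_v rotr_size_cat.
rewrite iter_rot1; last by rewrite /= size_cat sz_v; lia.
have -> : i = size (e :: v) by rewrite /= sz_v; lia.
by rewrite -cat_cons rot_size_cat.
Qed.

(* Normal form of s up to rotation, for s containing x exactly once. *)
Definition canon x s := rot (index x s) s.

Lemma canon_rot1 x s : x \in s -> uniq s -> canon x (rot 1 s) = canon x s.
Proof.
case: s => [//|a s] xs us; rewrite /canon rot1_cons -cats1 index_cat.
have [<-|ax] := eqVneq a x.
  move: us => /= /andP[/negbTE-> _].
  by rewrite eqxx /= addn0 rot_size_cat rot0.
have xs' : x \in s by move: xs; rewrite inE eq_sym (negbTE ax).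
rewrite xs' /= (negbTE ax) /rot drop_cat take_cat.
by rewrite index_mem xs' /= -catA.
Qed.

Lemma canon_iter_rot1 x k s : x \in s -> uniq s ->
  canon x (iter k (rot 1) s) = canon x s.
Proof.
move=> xs us; elim: k => //= k IHk.
have /andP[xsk usk] : (x \in iter k (rot 1) s) && uniq (iter k (rot 1) s).
  by elim: k {IHk} => [|k /andP[]] /=; rewrite ?mem_rot ?rot_uniq ?xs ?us // => -> ->.
by rewrite canon_rot1.
Qed.

Lemma canon_ins_cons x s j e : e != x -> j <= (size s).+1 ->
  exists2 j', j' <= size s & canon x (ins (x :: s) j e) = x :: ins s j' e.
Proof.
move=> ex; case: j => [|j] js; last by exists j; rewrite // /canon /= eqxx rot0.
exists (size s) => //.
rewrite /canon /ins /= (negbTE ex) eqxx take_size drop_size.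
by rewrite rot1_cons cats1.
Qed.

End Insertion.

Lemma oplus_range n a : 1 < n -> 1 <= oplus n a <= n.-1.
Proof. by rewrite /oplus; case: ifP; lia. Qed.

Lemma oplus_inj n a b : 1 <= a <= n.-1 -> 1 <= b <= n.-1 ->
  oplus n a = oplus n b -> a = b.
Proof. by rewrite /oplus; case: ifP; case: ifP; lia. Qed.

(* oplus is a cyclic shift of order n - 1 >= 3 *)
Lemma oplus_oplus_neq n a : 3 < n -> 1 <= a <= n.-1 -> oplus n (oplus n a) != a.
Proof. by move=> n_gt3 a_bd; apply/eqP; rewrite /oplus; case: ifP; case: ifP; lia. Qed.

Lemma seed_shape n s : 2 < n -> is_seed n s ->
  exists a t, [/\ s = n :: a :: t, size t = n - 3, 1 <= a <= n.-1,
                  uniq s & oplus n a \notin s].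
Proof.
move=> n_gt2 /and5P[/eqP sz_s us s_bd /eqP s0 mis_s].
case: s sz_s us s_bd s0 mis_s => [|b [|a t]] //= sz_s; try lia.
move=> us /and3P[_ /andP[a_ge1 a_le] _] b_n mis_s; subst b.
have a_n : a != n by move: us => /= /andP[/norP[+ _] _]; rewrite eq_sym.
by exists a, t; split=> //; move/eqP: a_n; lia.
Qed.

Lemma in_perms_canon n s p : 2 < n -> is_seed n s -> in_perms n s p ->
  exists2 j, j <= (size s).-1 & canon n p = n :: ins (behead s) j (mis n s).
Proof.
move=> n_gt2 seed_s.
have [a [t [-> _ _ us mis_s]]] := seed_shape n_gt2 seed_s.
case=> [j [k [js ->]]].
have mis_n : oplus n a != n by have := @oplus_range n a (ltnW n_gt2); apply: contraTneq => ->; lia.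
rewrite /sigma canon_iter_rot1; last first.
- by rewrite (perm_uniq (perm_ins _ _ _)) /= mis_s.
- by rewrite (perm_mem (perm_ins _ _ _)) !inE eqxx orbT.
have [j2 j2_bd eq_canon] := canon_ins_cons (s := a :: t) mis_n js.
by exists j2.
Qed.

Lemma parent_shape n a t psi : 3 < n ->
  is_seed n (n :: a :: t) -> is_seed n psi -> parent n psi (n :: a :: t) ->
  exists m, [/\ m <= size t, psi = n :: ins t m (oplus n a) & mis n psi = a].
Proof.
move=> n_gt3 seed_phi seed_psi [_ [p [in_psi in_phi]] _ mis_phi].
have n_gt2 : 2 < n by lia.
have [_ [_ [[<- <-] _ a_bd _ x_phi]]] := seed_shape n_gt2 seed_phi.
have [b [s [psi_bs _ _ _ y_psi]]] := seed_shape n_gt2 seed_psi.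
have mis_psi : mis n psi = a.
  apply: (oplus_inj _ a_bd (esym mis_phi)).
  by rewrite psi_bs; apply: oplus_range; lia.
have [j1 j1_bd] := in_perms_canon n_gt2 seed_phi in_phi.
have [j2 _ ->] := in_perms_canon n_gt2 seed_psi in_psi.
have a_psi : a \notin b :: s.
  by move: y_psi; rewrite -mis_psi psi_bs inE negb_or => /andP[].
rewrite mis_psi psi_bs /= => -[/(congr1 (rem a))].
rewrite rem_ins //; case: j1 j1_bd => [|m] m_bd /=.
  have x_a : oplus n a != a by move: x_phi; rewrite !inE !negb_or => /and3P[].
  rewrite (negbTE x_a) eqxx => -[b_x _]; move: mis_psi.
  by rewrite psi_bs /mis /= b_x => /eqP; rewrite (negbTE (oplus_oplus_neq n_gt3 a_bd)).
by rewrite eqxx => -> ; exists m.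
Qed.

Lemma iter_sigma_psi_i n a t i : 0 < i <= (size t).+1 ->
  iter i sigma (psi_i n (n :: a :: t) i) = n :: a :: ins t ((size t).+1 - i) (oplus n a).
Proof.
move=> i_bd; rewrite /psi_i /sigma iter_rot1_cons_rotr /=; last lia.
by have -> : (size t).+2 - i.-1 = ((size t).+1 - i).+2 by lia.
Qed.

Theorem mainTheorem4 (n : nat) (phi psi : seq nat) (i : nat) :
  5 <= n -> is_seed n phi -> is_seed n psi ->
  parent n psi phi -> 1 <= i <= n - 3 ->
  (son n phi i psi <-> ord n psi = i).
Proof.
move=> n_ge5 seed_phi seed_psi par i_bd.
have [a [t [phi_at sz_t _ _ x_phi]]] := seed_shape (ltnW (ltnW n_ge5)) seed_phi.
subst phi; set x := oplus n a in x_phi *.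
have [m [m_bd psi_m mis_psi]] := parent_shape (ltnW n_ge5) seed_phi seed_psi par.
move: x_phi; rewrite !inE !negb_or => /and3P[x_n _ x_t].
have ord_psi : ord n psi = (size t).+1 - m.
  by rewrite /ord mis_psi psi_m /= size_ins eq_sym (negbTE x_n) index_ins //; lia.
have tilde_psi : tilde n psi = n :: a :: ins t m x by rewrite /tilde mis_psi psi_m.
rewrite ord_psi /son iter_sigma_psi_i ?tilde_psi; last lia.
split=> [[_ [/(ins_pos_inj x_t) eq_pos]] | ord_i].
  have : (size t).+1 - i = m by apply: eq_pos; rewrite ?sz_t; lia.
  lia.
by split=> //; have -> : (size t).+1 - i = m by lia.
Qed.
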